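(* Let $T>0$, $0<\eta<T$, $\alpha >\frac{2T}{\eta ^{2}}$ and $\beta\geq0$. If $y\in C([0,T],[0,\infty))$, then the problem \[ u''(t)+y(t)=0,\ t\in(0,T),\qquad u(0)=\beta u(\eta),\quad u(T)=\alpha\int_0^\eta u(s)\,ds \] has no positive solutions.
   Context: A solution is a function $u\in C^2([0,T])$ satisfying the differential equation on $(0,T)$ and the two boundary conditions; a positive solution is a solution $u$ with $u(t)>0$ for $0<t<T$. *)

From Stdlib Require Import Reals.
From Coquelicot Require Import Coquelicot.
Open Scope R_scope.

Definition deriv_on (a b : R) (f f' : R -> R) : Prop :=
  forall t, a <= t <= b ->
    filterlim (fun s => (f s - f t) / (s - t))
      (within (fun s => a <= s <= b /\ s <> t) (locally t)) (locally (f' t)).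

Definition cont_on (a b : R) (f : R -> R) : Prop :=
  forall t, a <= t <= b ->
    filterlim f (within (fun s => a <= s <= b) (locally t)) (locally (f t)).

Definition is_solution (T eta alpha beta : R) (y u : R -> R) : Prop :=
  exists u1 u2 : R -> R,
    deriv_on 0 T u u1 /\ deriv_on 0 T u1 u2 /\ cont_on 0 T u2 /\
    (forall t, 0 < t < T -> u2 t + y t = 0) /\
    u 0 = beta * u eta /\
    u T = alpha * RInt u 0 eta.

Definition is_positive_solution (T eta alpha beta : R) (y u : R -> R) : Prop :=
  is_solution T eta alpha beta y u /\ (forall t, 0 < t < T -> u t > 0).

(** The equation forces [u'' = -y <= 0], so a solution is concave on [[0, T]];
    as it is positive inside, [u 0 >= 0], and concavity puts [u] above its chord
    from the origin: [u s >= s u(c) / c] for [0 < s <= c <= T]. Integrating over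
    [[0, eta]] with [c = eta] shows [I := int_0^eta u > 0], and with [c = T] gives
    [I >= u(T) eta^2 / (2 T) = alpha eta^2 I / (2 T) > I], a contradiction. *)

From Stdlib Require Import Reals Lra.
From Coquelicot Require Import Coquelicot.
Open Scope R_scope.

Lemma deriv_on_cont_on a b f f' : deriv_on a b f f' -> cont_on a b f.
Proof.
  intros D t Ht. apply filterlim_locally. intros eps.
  specialize (D t Ht).
  apply filterlim_locally with (eps := mkposreal 1 Rlt_0_1) in D.
  destruct D as [d Hd]; simpl in Hd.
  set (K := Rabs (f' t) + 1).
  assert (HK : 0 < K) by (unfold K; pose proof (Rabs_pos (f' t)); lra).
  assert (Hd' : 0 < Rmin d (eps / K)).
  { apply Rmin_pos; [apply cond_pos | apply Rdiv_lt_0_compat; [apply cond_pos | lra]]. }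
  exists (mkposreal _ Hd'). intros s Hs Hsab.
  change (Rabs (f s - f t) < eps).
  change (Rabs (s - t) < Rmin d (eps / K)) in Hs.
  pose proof (Rmin_l d (eps / K)). pose proof (Rmin_r d (eps / K)).
  destruct (Req_dec s t) as [-> | Hst].
  { rewrite Rminus_diag, Rabs_R0. apply cond_pos. }
  assert (Hq : Rabs ((f s - f t) / (s - t) - f' t) < 1).
  { apply (Hd s); [change (Rabs (s - t) < d); lra | tauto]. }
  assert (HqK : Rabs ((f s - f t) / (s - t)) < K).
  { pose proof (Rabs_triang ((f s - f t) / (s - t) - f' t) (f' t)) as Htri.
    replace ((f s - f t) / (s - t) - f' t + f' t) with ((f s - f t) / (s - t)) in Htri
      by ring.
    unfold K; lra. }
  replace (f s - f t) with ((f s - f t) / (s - t) * (s - t)) by (field; lra).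
  rewrite Rabs_mult.
  assert (Rabs (s - t) * K < eps) as Hst_K.
  { apply Rmult_lt_reg_r with (/ K); [apply Rinv_0_lt_compat; lra |].
    replace (Rabs (s - t) * K * / K) with (Rabs (s - t)) by (field; lra).
    unfold Rdiv in *; lra. }
  pose proof (Rabs_pos (s - t)). pose proof (Rabs_pos ((f s - f t) / (s - t))).
  nra.
Qed.

Lemma deriv_on_is_derive a b f f' g x : deriv_on a b f f' ->
  (forall s, a <= s <= b -> g s = f s) -> a < x < b -> is_derive g x (f' x).
Proof.
  intros D Hg Hx. apply is_derive_Reals. intros eps Heps.
  specialize (D x ltac:(lra)).
  apply filterlim_locally with (eps := mkposreal eps Heps) in D.
  destruct D as [d Hd]; simpl in Hd.
  assert (Hp : 0 < Rmin d (Rmin (x - a) (b - x))).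
  { repeat apply Rmin_pos; try lra. apply cond_pos. }
  exists (mkposreal _ Hp). intros k Hk Hkd. simpl in Hkd.
  pose proof (Rmin_l d (Rmin (x - a) (b - x))).
  pose proof (Rmin_r d (Rmin (x - a) (b - x))).
  pose proof (Rmin_l (x - a) (b - x)). pose proof (Rmin_r (x - a) (b - x)).
  assert (Hxk : a <= x + k <= b) by (split_Rabs; lra).
  rewrite (Hg (x + k) Hxk), (Hg x ltac:(lra)).
  replace k with (x + k - x) at 2 by ring.
  apply (Hd (x + k)); [| split; [exact Hxk | lra]].
  change (Rabs (x + k - x) < d). replace (x + k - x) with k by ring. lra.
Qed.

Lemma cont_on_nonneg_left a b f : a < b -> cont_on a b f ->
  (forall t, a < t < b -> 0 < f t) -> 0 <= f a.
Proof.
  intros Hab C Hpos. apply Rnot_lt_le. intros Hneg.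
  specialize (C a ltac:(lra)).
  apply filterlim_locally with (eps := mkposreal (- f a) ltac:(lra)) in C.
  destruct C as [d Hd]; simpl in Hd.
  set (s := a + Rmin (d / 2) ((b - a) / 2)).
  assert (Hs : 0 < Rmin (d / 2) ((b - a) / 2)).
  { apply Rmin_pos; [pose proof (cond_pos d) |]; lra. }
  pose proof (Rmin_l (d / 2) ((b - a) / 2)). pose proof (Rmin_r (d / 2) ((b - a) / 2)).
  pose proof (Hpos s ltac:(unfold s; lra)).
  assert (Hfs : Rabs (f s - f a) < - f a).
  { apply (Hd s); [| unfold s; lra].
    change (Rabs (s - a) < d). unfold s. pose proof (cond_pos d). split_Rabs; lra. }
  split_Rabs; lra.
Qed.

(* Composing with [clamp a b] extends a function continuous on [[a, b]] to one continuous
   everywhere, which is what the global MVT and integrability lemmas require. *)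
Definition clamp (a b x : R) : R := Rmax a (Rmin b x).

Lemma clamp_id a b x : a <= x <= b -> clamp a b x = x.
Proof. intros H. unfold clamp, Rmax, Rmin; repeat destruct Rle_dec; lra. Qed.

Lemma clamp_in a b x : a <= b -> a <= clamp a b x <= b.
Proof. intros H. unfold clamp, Rmax, Rmin; repeat destruct Rle_dec; lra. Qed.

Lemma clamp_lipschitz a b x y : a <= b ->
  Rabs (clamp a b y - clamp a b x) <= Rabs (y - x).
Proof. intros H. unfold clamp, Rmax, Rmin; repeat destruct Rle_dec; split_Rabs; lra. Qed.

Lemma cont_on_clamp a b f x : a <= b -> cont_on a b f ->
  continuous (fun x => f (clamp a b x)) x.
Proof.
  intros Hab C. apply (filterlim_comp _ _ _ (clamp a b) f _
    (within (fun s => a <= s <= b) (locally (clamp a b x)))).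
  - intros Q [d Hd]. exists d. intros z Hz. apply Hd; [| now apply clamp_in].
    change (Rabs (clamp a b z - clamp a b x) < d).
    change (Rabs (z - x) < d) in Hz.
    pose proof (clamp_lipschitz a b x z Hab). lra.
  - now apply C, clamp_in.
Qed.

Lemma cont_on_ex_RInt a b f c d : cont_on a b f -> a <= c <= d -> d <= b ->
  ex_RInt f c d.
Proof.
  intros C Hc Hd.
  apply (ex_RInt_ext (fun x => f (clamp a b x))).
  - intros x Hx. rewrite Rmin_left, Rmax_right in Hx by lra.
    rewrite clamp_id; [reflexivity | lra].
  - apply (ex_RInt_continuous (V := R_CompleteNormedModule)). intros z _.
    apply cont_on_clamp; [lra | exact C].
Qed.

Lemma is_RInt_ramp k a e : is_RInt (fun x => k * (x - a)) a e (k * (e - a) ^ 2 / 2).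
Proof.
  replace (k * (e - a) ^ 2 / 2) with (minus (k * (e - a) ^ 2 / 2) (k * (a - a) ^ 2 / 2))
    by (unfold minus, plus, opp; simpl; field).
  apply (is_RInt_derive (fun x => k * (x - a) ^ 2 / 2)).
  - intros x _. auto_derive; [exact I | field].
  - intros x _. apply continuity_pt_filterlim. reg.
Qed.

Lemma mvt_on a b g g' r s : a <= r -> r < s -> s <= b -> deriv_on a b g g' ->
  exists c, r < c < s /\ g s - g r = g' c * (s - r).
Proof.
  intros Hr Hrs Hs D.
  set (h := fun x => g (clamp a b x)).
  assert (Hh : forall x, r < x < s -> derivable_pt_lim h x (g' x)).
  { intros x Hx. apply is_derive_Reals, (deriv_on_is_derive a b g); [exact D | | lra].
    intros z Hz. unfold h. now rewrite clamp_id. }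
  pose (dh := fun x (Hx : r < x < s) => exist _ (g' x) (Hh x Hx) : derivable_pt h x).
  destruct (MVT h id r s dh (fun x _ => derivable_pt_id x) Hrs
    (fun x _ => proj2 (continuity_pt_filterlim _ _)
       (cont_on_clamp a b g x ltac:(lra) (deriv_on_cont_on a b g g' D)))
    (fun x _ => derivable_continuous_pt _ _ (derivable_pt_id x))) as [c [Hc E]].
  exists c; split; [exact Hc |].
  assert (Eid : derive_pt id c (derivable_pt_id c) = 1)
    by (apply derive_pt_eq_0, derivable_pt_lim_id).
  rewrite Eid in E. change (derive_pt h c (dh c Hc)) with (g' c) in E.
  unfold h, id in E. rewrite !clamp_id in E by lra. lra.
Qed.

Section Concave.

Variables (a b : R) (f f1 f2 : R -> R).
Hypotheses (Df : deriv_on a b f f1) (Df1 : deriv_on a b f1 f2)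
  (Hf2 : forall t, a < t < b -> f2 t <= 0).

Lemma deriv_nonincreasing s t : a < s < t -> t < b -> f1 t <= f1 s.
Proof.
  intros Hs Ht.
  destruct (mvt_on a b f1 f2 s t ltac:(lra) ltac:(lra) ltac:(lra) Df1) as [c [Hc E]].
  pose proof (Hf2 c ltac:(lra)). nra.
Qed.

Lemma concave_chord r s c : a <= r < s -> s < c <= b ->
  (c - r) * f s >= (s - r) * f c + (c - s) * f r.
Proof.
  intros Hr Hc.
  destruct (mvt_on a b f f1 r s ltac:(lra) ltac:(lra) ltac:(lra) Df) as [c1 [Hc1 E1]].
  destruct (mvt_on a b f f1 s c ltac:(lra) ltac:(lra) ltac:(lra) Df) as [c2 [Hc2 E2]].
  pose proof (deriv_nonincreasing c1 c2 ltac:(lra) ltac:(lra)).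
  assert (Hgap : 0 <= (c - s) * (s - r) * (f1 c1 - f1 c2))
    by (apply Rmult_le_pos; [apply Rmult_le_pos |]; lra).
  assert (Hid : (c - r) * f s - ((s - r) * f c + (c - s) * f r)
                = (c - s) * (f s - f r) - (s - r) * (f c - f s)) by ring.
  rewrite E1, E2 in Hid. lra.
Qed.

Lemma concave_RInt_ge e c : 0 <= f a -> a < e <= c -> c <= b ->
  RInt f a e >= f c / (c - a) * (e - a) ^ 2 / 2.
Proof.
  intros Hfa He Hc.
  rewrite <- (is_RInt_unique _ _ _ _ (is_RInt_ramp (f c / (c - a)) a e)).
  apply Rle_ge, RInt_le; [lra | eexists; apply is_RInt_ramp | |].
  - apply (cont_on_ex_RInt a b); [now apply (deriv_on_cont_on _ _ _ f1) | lra | lra].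
  - intros x Hx.
    assert (Hchord : (c - a) * f x >= (x - a) * f c).
    { destruct (Req_dec x c) as [-> | Hxc]; [lra |].
      pose proof (concave_chord a x c ltac:(lra) ltac:(lra)).
      assert (0 <= (c - x) * f a) by (apply Rmult_le_pos; lra). lra. }
    apply Rmult_le_reg_l with (c - a); [lra |].
    replace ((c - a) * (f c / (c - a) * (x - a))) with ((x - a) * f c) by (field; lra).
    lra.
Qed.

End Concave.

Theorem lemma2p3 (T eta alpha beta : R) (y : R -> R) :
  0 < T -> 0 < eta < T -> alpha > 2 * T / eta ^ 2 -> beta >= 0 ->
  cont_on 0 T y -> (forall t, 0 <= t <= T -> y t >= 0) ->
  ~ exists u : R -> R, is_positive_solution T eta alpha beta y u.
Proof.
  intros HT Heta Halpha _ _ Hy [u [[u1 [u2 [Du [Du1 [_ [Hode [_ HuT]]]]]]] Hpos]].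
  assert (Hu2 : forall t, 0 < t < T -> u2 t <= 0).
  { intros t Ht. pose proof (Hode t Ht). pose proof (Hy t ltac:(lra)). lra. }
  assert (Hu0 : 0 <= u 0)
    by exact (cont_on_nonneg_left 0 T u HT (deriv_on_cont_on _ _ _ _ Du) Hpos).
  pose proof (concave_RInt_ge 0 T u u1 u2 Du Du1 Hu2 eta T Hu0 ltac:(lra) ltac:(lra))
    as HI_T.
  pose proof (concave_RInt_ge 0 T u u1 u2 Du Du1 Hu2 eta eta Hu0 ltac:(lra) ltac:(lra))
    as HI_eta.
  set (I := RInt u 0 eta) in *.
  assert (HI : 0 < I).
  { replace (u eta / (eta - 0) * (eta - 0) ^ 2 / 2) with (u eta * eta / 2) in HI_eta
      by (field; lra).
    pose proof (Hpos eta ltac:(lra)). nra. }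
  assert (Hk : 1 < alpha * eta ^ 2 / (2 * T)).
  { assert (Heta2 : 0 < eta ^ 2) by (apply pow_lt; lra).
    apply Rmult_gt_compat_r with (r := eta ^ 2) in Halpha; [| exact Heta2].
    replace (2 * T / eta ^ 2 * eta ^ 2) with (2 * T) in Halpha by (field; lra).
    apply Rmult_lt_reg_r with (2 * T); [lra |].
    replace (alpha * eta ^ 2 / (2 * T) * (2 * T)) with (alpha * eta ^ 2) by (field; lra).
    lra. }
  rewrite HuT in HI_T.
  replace (alpha * I / (T - 0) * (eta - 0) ^ 2 / 2) with (alpha * eta ^ 2 / (2 * T) * I)
    in HI_T by (field; lra).
  nra.
Qed.
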